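(* Let $\vec d=(\vec a,\vec b)$ be a bidegree sequence of length $n$ with $\sum_{i=1}^n a_i=\sum_{i=1}^n b_i=n\bar c$. Suppose $M_a,M_b\in\mathbb{N}$ satisfy $\max_i a_i\le M_a$, $\max_i b_i\le M_b$ and $(M_a+1)M_b\le n\bar c$. Then $\vec d$ is graphic. In particular, if $\max\vec d\le\sqrt{\tfrac14+n\bar c}-\tfrac12$, then $\vec d$ is graphic.
   Context: A bidegree sequence of length $n$ is a pair $\vec d=(\vec a,\vec b)$ with $\vec a=(a_1,\dots,a_n)\in\mathbb{N}_0^n$ and $\vec b=(b_1,\dots,b_n)\in\mathbb{N}_0^n$. It is graphic with loops if there is an $n\times n$ matrix with entries in $\{0,1\}$ whose $i$th row sum is $a_i$ and whose $i$th column sum is $b_i$ for every $i\in[1..n]$; it is graphic if such a matrix exists with all diagonal entries equal to $0$. $\max\vec d$ and $\min\vec d$ denote the maximum and minimum over all $2n$ entries $a_1,\dots,a_n,b_1,\dots,b_n$. The number $\bar c$ (the average degree) is defined by $\sum_i a_i=\sum_i b_i=n\bar c$. *)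

From HB Require Import structures.
From mathcomp Require Import all_boot all_order all_algebra.
Set Implicit Arguments. Unset Strict Implicit. Unset Printing Implicit Defensive.
Import Order.TTheory GRing.Theory Num.Theory.

(* A bidegree sequence of length n is a pair (a, b) of functions 'I_n -> nat. *)

Definition graphic_with_loops (n : nat) (a b : 'I_n -> nat) : Prop :=
  exists M : 'I_n -> 'I_n -> bool,
    (forall i, \sum_(j < n) (M i j : nat) = a i) /\
    (forall j, \sum_(i < n) (M i j : nat) = b j).

Definition graphic (n : nat) (a b : 'I_n -> nat) : Prop :=
  exists M : 'I_n -> 'I_n -> bool,
    (forall i, M i i = false) /\
    (forall i, \sum_(j < n) (M i j : nat) = a i) /\
    (forall j, \sum_(i < n) (M i j : nat) = b j).

(* max over all 2n entries a_1..a_n, b_1..b_n (0 when n = 0) *)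
Definition maxd (n : nat) (a b : 'I_n -> nat) : nat :=
  \max_(i < n) maxn (a i) (b i).

From HB Require Import structures.
From mathcomp Require Import all_boot all_order all_algebra.
From mathcomp Require Import zify lra.
From Stdlib Require Import Classical.
Import Order.TTheory GRing.Theory Num.Theory.
Set Implicit Arguments. Unset Strict Implicit.

(* Gale's theorem with forbidden positions: a 0/1 matrix supported on an allowed
   set [E] of positions, with row sums [a] and column sums [b] of equal total,
   exists as soon as [a(R) <= b(C) + e_E(R, ~C)] for all row sets [R] and
   column sets [C]. Induct on [|E|]: pick an allowed position (i0, j0); if no
   tight pair (R, C) has [i0 \in R] and [j0 \notin C], the condition survives
   deleting (i0, j0); otherwise decrementing [a i0] and [b j0] keeps it, since
   a tight pair crossing (i0, j0) the other way would, by submodularity of the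
   cut function, violate the condition at the union or the intersection.
   Off the diagonal [e(R, ~C) = |R||~C| - |R :&: ~C|], and the hypothesis
   [(Ma + 1) Mb <= S] gives the condition by comparing [|R|] with [Mb] and
   [|~C|] with [Ma]. The square-root bound is [m (m + 1) <= S] in disguise. *)

Section GaleTheorem.

Variable n : nat.
Implicit Types (E F : rel 'I_n) (R C : pred 'I_n) (a b : 'I_n -> nat).

Definition sum_on R a := \sum_(i < n | R i) a i.

Definition cut E R C := \sum_(i < n | R i) \sum_(j < n | ~~ C j) (E i j : nat).

Definition gale_cond E a b := forall R C, sum_on R a <= sum_on C b + cut E R C.

Definition tight E a b R C := sum_on C b + cut E R C <= sum_on R a.

Definition realizes E F a b :=
  [/\ subrel F E, forall i, \sum_(j < n) (F i j : nat) = a i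
    & forall j, \sum_(i < n) (F i j : nat) = b j].

Definition del_edge E i0 j0 : rel 'I_n :=
  fun i j => E i j && ~~ ((i == i0) && (j == j0)).

Definition decr a i0 i := a i - (i == i0).

Lemma sum_indicator1 (P : pred 'I_n) i0 : \sum_(i < n | P i) (i == i0 : nat) = P i0.
Proof.
rewrite big_mkcond (bigD1 i0) //= eqxx big1 ?addn0 => [|i /negbTE->]; last by case: (P i).
by case: (P i0).
Qed.

Lemma sum_indicator1T i0 : \sum_(i < n) (i == i0 : nat) = 1.
Proof. exact: (sum_indicator1 predT i0). Qed.

Lemma sum_orb_point (f : 'I_n -> bool) (c : bool) k0 :
  (c -> f k0 = false) -> \sum_(k < n) (f k || c && (k == k0) : nat) = \sum_(k < n) f k + c.
Proof.
move=> f0; rewrite -[X in _ = _ + X]muln1 -(sum_indicator1T k0) big_distrr -big_split.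
apply: eq_bigr => k _; case: eqP => [->|_]; case: c f0 => [/(_ isT) f0|_];
  by rewrite ?f0; case: (f _).
Qed.

Lemma sum_on_modular R1 R2 a :
  sum_on (predU R1 R2) a + sum_on (predI R1 R2) a = sum_on R1 a + sum_on R2 a.
Proof.
rewrite /sum_on !(big_mkcond (predU _ _), big_mkcond (predI _ _)).
rewrite !(big_mkcond R1, big_mkcond R2).
rewrite -!big_split; apply: eq_bigr => i _ /=.
by case: (R1 i); case: (R2 i); rewrite /= ?addn0.
Qed.

Lemma sum_on_decr R a i0 : 0 < a i0 -> sum_on R a = sum_on R (decr a i0) + R i0.
Proof.
move=> a_gt0; rewrite /sum_on -(sum_indicator1 R i0) -big_split; apply: eq_bigr => i _ /=.
by rewrite /decr; case: eqP => [->|_]; rewrite ?subn0 ?addn0 // subn1 addn1 prednK.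
Qed.

Lemma sum_decr a i0 : 0 < a i0 -> \sum_(i < n) a i = \sum_(i < n) decr a i0 i + 1.
Proof. exact: (sum_on_decr predT). Qed.

Lemma cut_point R C i0 j0 :
  \sum_(i < n | R i) \sum_(j < n | ~~ C j) ((i == i0) && (j == j0) : nat) = R i0 && ~~ C j0.
Proof.
transitivity (\sum_(i < n | R i) (i == i0) * ~~ C j0).
  apply: eq_bigr => i _; case: eqP => _ /=; last by rewrite big1.
  by rewrite (sum_indicator1 (fun j => ~~ C j)) mul1n.
by rewrite -big_distrl sum_indicator1; case: (R i0); case: (C j0).
Qed.

Lemma cut_del_edge E R C i0 j0 :
  E i0 j0 -> cut E R C = cut (del_edge E i0 j0) R C + (R i0 && ~~ C j0).
Proof.
move=> e0; rewrite /cut -(cut_point R C i0 j0) -big_split; apply: eq_bigr => i _.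
rewrite -big_split; apply: eq_bigr => j _ /=.
rewrite /del_edge; case: eqP => [->|_]; case: eqP => [->|_];
  by rewrite ?e0 /= ?andbF ?andbT ?addn0.
Qed.

Lemma cutE E R C : cut E R C = \sum_(i < n) \sum_(j < n) (R i && ~~ C j && E i j : nat).
Proof.
rewrite /cut big_mkcond; apply: eq_bigr => i _; rewrite big_mkcond.
by case: (R i); [apply: eq_bigr => j _; case: (C j) | rewrite big1].
Qed.

Lemma cut_submodular_strict E R1 C1 R2 C2 i0 j0 :
    E i0 j0 -> R1 i0 -> ~~ C1 j0 -> ~~ R2 i0 -> C2 j0 ->
  cut E (predU R1 R2) (predU C1 C2) + cut E (predI R1 R2) (predI C1 C2) <
  cut E R1 C1 + cut E R2 C2.
Proof.
move=> e0 r1 c1 r2 c2; rewrite -addn1.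
have := cut_point predT pred0 i0 j0; rewrite /= => <-.
rewrite !cutE -!big_split; apply: leq_sum => i _; rewrite -!big_split.
apply: leq_sum => j _ /=.
case: eqP => [->|_]; case: eqP => [->|_]; rewrite ?e0 ?r1 ?(negbTE c1) ?(negbTE r2) ?c2 /=;
  by case: (R1 _); case: (R2 _); case: (C1 _); case: (C2 _); case: (E _ _).
Qed.

Lemma tight_pairs_uncrossed E a b R1 C1 R2 C2 i0 j0 :
    gale_cond E a b -> E i0 j0 -> R1 i0 -> ~~ C1 j0 -> tight E a b R1 C1 ->
  ~~ R2 i0 -> C2 j0 -> ~~ tight E a b R2 C2.
Proof.
move=> galeE e0 r1 c1 tight1 r2 c2; apply/negP => tight2.
have := galeE (predU R1 R2) (predU C1 C2); have := galeE (predI R1 R2) (predI C1 C2).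
have := sum_on_modular R1 R2 a; have := sum_on_modular C1 C2 b.
have := cut_submodular_strict e0 r1 c1 r2 c2.
move: tight1 tight2; rewrite /tight; lia.
Qed.

Lemma gale_cond_del_edge E a b i0 j0 :
    E i0 j0 -> gale_cond E a b ->
    (forall R C, R i0 -> ~~ C j0 -> ~~ tight E a b R C) ->
  gale_cond (del_edge E i0 j0) a b.
Proof.
move=> e0 galeE loose R C; have := galeE R C; rewrite (cut_del_edge _ _ e0).
case: (boolP (R i0)) => r; case: (boolP (C j0)) => c //=; rewrite ?addn0 // => le_a.
by have := loose R C r c; rewrite /tight -ltnNge (cut_del_edge _ _ e0) r c; lia.
Qed.

Lemma tight_crossing_pos E a b R1 C1 i0 j0 :
    \sum_(i < n) a i = \sum_(j < n) b j -> gale_cond E a b -> E i0 j0 ->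
    R1 i0 -> ~~ C1 j0 -> tight E a b R1 C1 ->
  0 < a i0 /\ 0 < b j0.
Proof.
move=> sum_ab galeE e0 r1 c1 tight1; split; rewrite lt0n; apply/negP => /eqP zero.
- move: (tight_pairs_uncrossed (R2 := predC1 i0) (C2 := predT) galeE e0 r1 c1 tight1).
  rewrite /= eqxx => /(_ isT isT)/negP[].
  rewrite /tight /cut big1 ?addn0 => [|i _]; last exact: big_pred0.
  rewrite /sum_on -[\sum_(i < n | predT i) b i]/(\sum_(i < n) b i) -sum_ab.
  by rewrite (bigD1 i0) //= zero.
- have /negP[] := tight_pairs_uncrossed (R2 := pred0) (C2 := pred1 j0)
    galeE e0 r1 c1 tight1 erefl (eqxx j0).
  by rewrite /tight /sum_on /cut big_pred1_eq zero !big_pred0.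
Qed.

Lemma gale_cond_decr E a b R1 C1 i0 j0 :
    gale_cond E a b -> E i0 j0 -> 0 < a i0 -> 0 < b j0 ->
    R1 i0 -> ~~ C1 j0 -> tight E a b R1 C1 ->
  gale_cond (del_edge E i0 j0) (decr a i0) (decr b j0).
Proof.
move=> galeE e0 a0 b0 r1 c1 tight1 R C.
have := tight_pairs_uncrossed (R2 := R) (C2 := C) galeE e0 r1 c1 tight1.
rewrite /tight (cut_del_edge _ _ e0) (sum_on_decr R a0) (sum_on_decr C b0).
have := galeE R C; rewrite (cut_del_edge _ _ e0) (sum_on_decr R a0) (sum_on_decr C b0).
by case: (R i0); case: (C j0) => /=; lia.
Qed.

Lemma realizes_add_edge E F a b i0 j0 :
    E i0 j0 -> 0 < a i0 -> 0 < b j0 ->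
    realizes (del_edge E i0 j0) F (decr a i0) (decr b j0) ->
  realizes E (fun i j => F i j || (i == i0) && (j == j0)) a b.
Proof.
move=> e0 a0 b0 [subF rowF colF].
have F0 : F i0 j0 = false by apply/negP => /subF; rewrite /del_edge !eqxx andbF.
split=> [i j /orP[/subF/andP[] // | /andP[/eqP-> /eqP->]] // | i | j].
- rewrite sum_orb_point => [|/eqP->] //.
  by rewrite rowF /decr; case: eqP => [->|_]; rewrite ?subnK ?subn0 ?addn0.
- under eq_bigr do rewrite andbC; rewrite sum_orb_point => [|/eqP->] //.
  by rewrite colF /decr; case: eqP => [->|_]; rewrite ?subnK ?subn0 ?addn0.
Qed.

Lemma gale_cond_realizable E a b :
  \sum_(i < n) a i = \sum_(j < n) b j -> gale_cond E a b -> exists F, realizes E F a b.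
Proof.
move Nedges: (cut E predT pred0) => N.
elim: N E a b Nedges => [|N IH] E a b Nedges sum_ab galeE.
  have a0 i : a i = 0.
    have := galeE predT pred0; rewrite Nedges /sum_on (bigD1 i) //= big_pred0_eq.
    by rewrite leqn0 addn_eq0 => /andP[/eqP].
  have b0 j : b j = 0.
    have : \sum_(j < n) b j = 0 by rewrite -sum_ab big1.
    by rewrite (bigD1 j) //= => /eqP; rewrite addn_eq0 => /andP[/eqP].
  by exists (fun _ _ => false); split=> // i; rewrite big1 ?a0 ?b0.
case: (pickP (fun p : 'I_n * 'I_n => E p.1 p.2)) => [[i0 j0] /= e0 | no_edge]; last first.
  move: Nedges; rewrite cutE big1 // => i _; rewrite big1 // => j _.
  by have /= -> := no_edge (i, j).
have Nedges' : cut (del_edge E i0 j0) predT pred0 = N.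
  by move: Nedges; rewrite (cut_del_edge _ _ e0) addn1 => -[].
have [[R1 [C1 [r1 c1 tight1]]] | no_tight] :=
  classic (exists R C, [/\ R i0, ~~ C j0 & tight E a b R C]).
  have [a0 b0] := tight_crossing_pos sum_ab galeE e0 r1 c1 tight1.
  have sum_ab' : \sum_(i < n) decr a i0 i = \sum_(j < n) decr b j0 j.
    by apply/eqP; rewrite -(eqn_add2r 1) -!sum_decr // sum_ab.
  have [F realF] := IH _ _ _ Nedges' sum_ab' (gale_cond_decr galeE e0 a0 b0 r1 c1 tight1).
  by exists (fun i j => F i j || (i == i0) && (j == j0)); apply: realizes_add_edge.
have galeE' : gale_cond (del_edge E i0 j0) a b.
  apply: gale_cond_del_edge e0 galeE _ => R C r c.
  by apply/negP => tightRC; apply: no_tight; exists R, C.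
have [F [subF rowF colF]] := IH _ _ _ Nedges' sum_ab galeE'.
by exists F; split=> // i j /subF/andP[].
Qed.

Lemma cut_offdiag R C :
  cut (fun i j => i != j) R C + #|[predI R & predC C]| = #|R| * #|predC C|.
Proof.
have -> : #|[predI R & predC C]| = \sum_(i < n | R i) (~~ C i : nat).
  by rewrite -sum1_card (eq_bigl (fun i => R i && ~~ C i)) // big_mkcondr.
rewrite /cut -big_split -sum_nat_const; apply: eq_bigr => i _ /=.
rewrite -sum1_card -(sum_indicator1 (fun j => ~~ C j)) -big_split.
by apply: eq_bigr => j _; rewrite eq_sym; case: eqP.
Qed.

Lemma sum_on_le_card R a M : (forall i, a i <= M) -> sum_on R a <= #|R| * M.
Proof. by move=> aM; rewrite -sum_nat_const; apply: leq_sum. Qed.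

(* [A] stands for [a(R)], [B] for [b(~C)], [x] for [|R|], [y] for [|~C|]
   and [z] for [|R :&: ~C|]. *)
Lemma offdiag_budget A B S x y z Ma Mb :
    A <= x * Ma -> A <= S -> B <= y * Mb -> B <= S -> z <= x -> z <= y ->
    (Ma + 1) * Mb <= S ->
  A + B + z <= S + x * y.
Proof.
move=> AMa AS BMb BS zx zy MaMb.
case: (leqP (Mb + 1) x) => [Mb_lt_x | x_le_Mb]; first nia.
case: (leqP (Ma + 1) y) => [Ma_lt_y | y_le_Ma]; first nia.
have [u defMb] : exists u, Mb = x + u by exists (Mb - x); lia.
have [v defMa] : exists v, Ma = y + v by exists (Ma - y); lia.
subst Ma Mb; nia.
Qed.

Lemma gale_cond_offdiag a b Ma Mb :
    (forall i, a i <= Ma) -> (forall j, b j <= Mb) ->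
    \sum_(i < n) a i = \sum_(j < n) b j -> (Ma + 1) * Mb <= \sum_(i < n) a i ->
  gale_cond (fun i j => i != j) a b.
Proof.
move=> aMa bMb sum_ab MaMb R C.
have sumR : sum_on R a + sum_on (predC R) a = \sum_(i < n) a i by rewrite [RHS](bigID R).
have sumC : sum_on C b + sum_on (predC C) b = \sum_(i < n) a i by rewrite sum_ab [RHS](bigID C).
have zx : #|[predI R & predC C]| <= #|R|.
  by apply: subset_leq_card; apply/subsetP => i; rewrite !inE => /andP[].
have zy : #|[predI R & predC C]| <= #|predC C|.
  by apply: subset_leq_card; apply/subsetP => i; rewrite !inE => /andP[].
have AS : sum_on R a <= \sum_(i < n) a i by rewrite -sumR leq_addr.
have BS : sum_on (predC C) b <= \sum_(i < n) a i by rewrite -sumC leq_addl.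
have := offdiag_budget (sum_on_le_card R aMa) AS (sum_on_le_card (predC C) bMb) BS zx zy MaMb.
rewrite -cut_offdiag; lia.
Qed.

End GaleTheorem.

Lemma graphic_of_degree_bounds n (a b : 'I_n -> nat) Ma Mb :
    \sum_(i < n) a i = \sum_(j < n) b j ->
    (forall i, a i <= Ma) -> (forall j, b j <= Mb) -> (Ma + 1) * Mb <= \sum_(i < n) a i ->
  graphic a b.
Proof.
move=> sum_ab aMa bMb MaMb.
have [F [subF rowF colF]] :=
  gale_cond_realizable sum_ab (gale_cond_offdiag aMa bMb sum_ab MaMb).
by exists F; split=> // i; apply/negbTE/negP => /subF; rewrite eqxx.
Qed.

Lemma le_sqrt_quarter_sub_half (R : rcfType) (m S : nat) :
  ((m%:R : R) <= Num.sqrt (1 / 4 + S%:R) - 1 / 2)%R -> (m + 1) * m <= S.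
Proof.
move=> le_m; rewrite -(ler_nat R) natrM natrD.
have ge0 : (0 <= 1 / 4 + S%:R :> R)%R by rewrite addr_ge0 ?divr_ge0 ?ler0n.
have := sqr_sqrtr ge0; have := sqrtr_ge0 (1 / 4 + S%:R : R)%R; have := ler0n R m.
nra.
Qed.

Theorem theorem4 (n : nat) (a b : 'I_n -> nat) :
  \sum_(i < n) a i = \sum_(i < n) b i ->
  (forall Ma Mb : nat,
     (forall i, a i <= Ma) -> (forall i, b i <= Mb) ->
     (Ma + 1) * Mb <= \sum_(i < n) a i ->
     graphic a b) /\
  (forall R : rcfType,
     ((maxd a b)%:R : R) <=
       Num.sqrt (1 / 4 + (\sum_(i < n) a i)%:R) - 1 / 2 ->
     graphic a b)%R.
Proof.
move=> sum_ab; split=> [Ma Mb | R le_maxd]; first exact: graphic_of_degree_bounds.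
have le_maxd_ab i : maxn (a i) (b i) <= maxd a b by apply: leq_bigmax.
apply: (graphic_of_degree_bounds (Ma := maxd a b) (Mb := maxd a b) sum_ab).
- by move=> i; apply: leq_trans (le_maxd_ab i); apply: leq_maxl.
- by move=> j; apply: leq_trans (le_maxd_ab j); apply: leq_maxr.
- exact: le_sqrt_quarter_sub_half le_maxd.
Qed.
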